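(* Let $G$ be a finitely generated group with a left-invariant total order $\prec$, and let $Z$ be a finitely generated central subgroup of $G$ which is cofinal for $\prec$. Then $P_\prec=\{g\in G\mid 1\prec g\}$ is coarsely connected.
   Context: A subgroup $Z$ is cofinal for $\prec$ if for every $g\in G$ there exist $h_1,h_2\in Z$ with $h_1\prec g\prec h_2$. Coarse connectedness is with respect to the word metric $d_X$ of a finite generating set $X$: a subset $S$ is coarsely connected if there is $r\ge1$ such that any two elements of $S$ are joined by a sequence $s_0,\dots,s_n$ in $S$ with $d_X(s_i,s_{i+1})\le r$. *)

From Stdlib Require Import List Relations.
Import ListNotations.
Set Implicit Arguments.

Section GroupDefs.
Variable G : Type.
Variables (mul : G -> G -> G) (e : G) (inv : G -> G).

Definition is_group : Prop :=
  (forall x y z, mul x (mul y z) = mul (mul x y) z) /\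
  (forall x, mul e x = x) /\ (forall x, mul x e = x) /\
  (forall x, mul (inv x) x = e) /\ (forall x, mul x (inv x) = e).

Definition word_prod (w : list G) : G := fold_right mul e w.

Definition letter (X : list G) (a : G) : Prop := In a X \/ In (inv a) X.

Definition gen_by (X : list G) (g : G) : Prop :=
  exists w : list G, Forall (letter X) w /\ g = word_prod w.

Definition generates (X : list G) : Prop := forall g, gen_by X g.

Definition fin_generated : Prop := exists X : list G, generates X.

Definition dist_le (X : list G) (g h : G) (r : nat) : Prop :=
  exists w : list G, Forall (letter X) w /\ length w <= r /\ mul g (word_prod w) = h.

Definition left_inv_total_order (lt : G -> G -> Prop) : Prop :=
  (forall x, ~ lt x x) /\
  (forall x y z, lt x y -> lt y z -> lt x z) /\
  (forall x y, x = y \/ lt x y \/ lt y x) /\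
  (forall g x y, lt x y -> lt (mul g x) (mul g y)).

Definition is_subgroup (Z : G -> Prop) : Prop :=
  Z e /\ (forall x y, Z x -> Z y -> Z (mul x y)) /\ (forall x, Z x -> Z (inv x)).

Definition central (Z : G -> Prop) : Prop :=
  forall z g, Z z -> mul z g = mul g z.

Definition fg_subgroup (Z : G -> Prop) : Prop :=
  exists Y : list G, (forall y, In y Y -> Z y) /\ (forall z, Z z <-> gen_by Y z).

Definition cofinal (lt : G -> G -> Prop) (Z : G -> Prop) : Prop :=
  forall g, exists h1 h2, Z h1 /\ Z h2 /\ lt h1 g /\ lt g h2.

Definition coarsely_connected (X : list G) (S : G -> Prop) : Prop :=
  exists r : nat, 1 <= r /\
    forall s t, S s -> S t ->
      clos_refl_trans G (fun a b => S a /\ S b /\ dist_le X a b r) s t.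

Definition positive_cone (lt : G -> G -> Prop) : G -> Prop := fun g => lt e g.

End GroupDefs.

From Stdlib Require Import List Relations Lia Arith.

(* Let Y generate Z and let m be the largest element of Y ∪ Y^-1 ∪ {1}.
   Since Z is central, every product of n letters of Y^±1 is at most m^n,
   so cofinality of Z forces 1 ≺ m and, for every g, 1 ≺ m^k g for all large k.
   Multiplying by m (a word of bounded length, central, and increasing)
   moves a positive element up inside the positive cone.  Hence a positive
   s = x_1 ... x_l is joined to m^N s, and, for N large, the path
   m^N, m^N x_1, ..., m^N x_1 ... x_l = m^N s also stays positive; so every
   positive element is joined to the common point m^N by steps of bounded
   length. *)

Lemma eventually_forall_le (P : nat -> nat -> Prop) (K : nat) :
  (forall k, exists N, forall n, N <= n -> P k n) ->
  exists N, forall k, k <= K -> forall n, N <= n -> P k n.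
Proof.
  intros HP. induction K as [|K [N1 HN1]].
  - destruct (HP 0) as [N HN]. exists N. intros k Hk n Hn.
    replace k with 0 by lia. auto.
  - destruct (HP (S K)) as [N2 HN2]. exists (max N1 N2). intros k Hk n Hn.
    destruct (Nat.eq_dec k (S K)) as [->|Hne].
    + apply HN2. lia.
    + apply HN1; lia.
Qed.

Section Group.
Variables (G : Type) (mul : G -> G -> G) (e : G) (inv : G -> G).
Hypothesis HG : is_group mul e inv.
Local Infix "*" := mul.

Lemma mulgA x y z : x * (y * z) = (x * y) * z.
Proof. apply HG. Qed.

Lemma mul1g x : e * x = x.
Proof. apply HG. Qed.

Lemma mulg1 x : x * e = x.
Proof. apply HG. Qed.

Lemma mulVg x : inv x * x = e.
Proof. apply HG. Qed.

Lemma mulgV x : x * inv x = e.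
Proof. apply HG. Qed.

Lemma invgK x : inv (inv x) = x.
Proof.
  rewrite <- (mulg1 (inv (inv x))), <- (mulVg x), mulgA, mulVg, mul1g.
  reflexivity.
Qed.

Lemma word_prod_cat u v :
  word_prod mul e (u ++ v) = word_prod mul e u * word_prod mul e v.
Proof.
  induction u as [|a u IH]; simpl.
  - rewrite mul1g. reflexivity.
  - rewrite IH, mulgA. reflexivity.
Qed.

Definition inv_word (w : list G) : list G := rev (map inv w).

Lemma word_prod_inv_word w : word_prod mul e w * word_prod mul e (inv_word w) = e.
Proof.
  induction w as [|a w IH]; simpl.
  - apply mul1g.
  - unfold inv_word. simpl. fold (inv_word w).
    rewrite word_prod_cat. simpl. rewrite mulg1, <- mulgA,
      (mulgA (word_prod mul e w)), IH, mul1g, mulgV.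
    reflexivity.
Qed.

Lemma letter_inv X a : letter inv X a -> letter inv X (inv a).
Proof. unfold letter. rewrite invgK. tauto. Qed.

Lemma dist_le_sym X g h r : dist_le mul e inv X g h r -> dist_le mul e inv X h g r.
Proof.
  intros (w & Hw & Hlen & <-). exists (inv_word w). split; [|split].
  - apply Forall_rev, Forall_map. eapply Forall_impl; [apply letter_inv|exact Hw].
  - unfold inv_word. rewrite length_rev, length_map. exact Hlen.
  - rewrite <- mulgA, word_prod_inv_word, mulg1. reflexivity.
Qed.

Lemma dist_le_letter X g a r : 1 <= r -> letter inv X a -> dist_le mul e inv X g (g * a) r.
Proof.
  intros Hr Ha. exists (a :: nil). simpl. rewrite mulg1. auto.
Qed.

Definition coarse_step (X : list G) (A : G -> Prop) (r : nat) (a b : G) : Prop :=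
  A a /\ A b /\ dist_le mul e inv X a b r.

Lemma coarse_path_sym X A r a b :
  clos_refl_trans G (coarse_step X A r) a b -> clos_refl_trans G (coarse_step X A r) b a.
Proof.
  induction 1 as [a b (Ha & Hb & Hab)| |a b c _ IHab _ IHbc].
  - apply rt_step. repeat split; auto. apply dist_le_sym. exact Hab.
  - apply rt_refl.
  - eapply rt_trans; eauto.
Qed.

Lemma coarse_path_word X A r w c :
  1 <= r -> Forall (letter inv X) w ->
  (forall k, A (c * word_prod mul e (firstn k w))) ->
  clos_refl_trans G (coarse_step X A r) c (c * word_prod mul e w).
Proof.
  intros Hr. revert c. induction w as [|a w IH]; intros c Hw Hpre; simpl.
  - rewrite mulg1. apply rt_refl.
  - inversion_clear Hw as [|? ? Ha Hw'].
    apply rt_trans with (c * a).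
    + pose proof (Hpre 0) as Hc. pose proof (Hpre 1) as Hca. simpl in Hc, Hca.
      rewrite mulg1 in Hc, Hca. apply rt_step. repeat split; auto.
      apply dist_le_letter; auto.
    + rewrite mulgA. apply IH; auto. intros k. rewrite <- mulgA. apply (Hpre (S k)).
Qed.

Definition pow (z : G) (n : nat) : G := Nat.iter n (mul z) e.

Lemma pow_succ z n : pow z (S n) = z * pow z n.
Proof. reflexivity. Qed.

Lemma pow_add z n k : pow z (n + k) = pow z n * pow z k.
Proof.
  induction n as [|n IH]; simpl.
  - rewrite mul1g. reflexivity.
  - rewrite <- mulgA. f_equal. exact IH.
Qed.

Lemma pow_mulC z n : pow z n * z = z * pow z n.
Proof.
  induction n as [|n IH]; simpl.
  - rewrite mul1g, mulg1. reflexivity.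
  - rewrite <- mulgA. f_equal. exact IH.
Qed.

Section Order.
Variable lt : G -> G -> Prop.
Hypothesis Hlt : left_inv_total_order mul lt.
Local Infix "≺" := lt (at level 70).

Definition le (x y : G) : Prop := x = y \/ x ≺ y.
Local Infix "≼" := le (at level 70).

Lemma lt_irrefl x : ~ x ≺ x.
Proof. apply Hlt. Qed.

Lemma lt_trans x y z : x ≺ y -> y ≺ z -> x ≺ z.
Proof. apply Hlt. Qed.

Lemma lt_total x y : x = y \/ x ≺ y \/ y ≺ x.
Proof. apply Hlt. Qed.

Lemma lt_mul2l g x y : x ≺ y -> g * x ≺ g * y.
Proof. apply Hlt. Qed.

Lemma le_refl x : x ≼ x.
Proof. left. reflexivity. Qed.

Lemma le_trans x y z : x ≼ y -> y ≼ z -> x ≼ z.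
Proof. intros [->|Hxy] [->|Hyz]; unfold le; eauto using lt_trans. Qed.

Lemma lt_le_trans x y z : x ≺ y -> y ≼ z -> x ≺ z.
Proof. intros Hxy [->|Hyz]; eauto using lt_trans. Qed.

Lemma le_mul2l g x y : x ≼ y -> g * x ≼ g * y.
Proof. intros [->|Hxy]; [apply le_refl|right; apply lt_mul2l; exact Hxy]. Qed.

Lemma ex_list_max x l : exists m, In m (x :: l) /\ forall a, In a (x :: l) -> a ≼ m.
Proof.
  revert x. induction l as [|y l IH]; intros x.
  - exists x. split; [left; reflexivity|]. intros a [<-|[]]. apply le_refl.
  - destruct (IH y) as (m & Hm & Hmax).
    destruct (lt_total x m) as [Hxm|[Hxm|Hmx]].
    + exists m. split; [right; exact Hm|].
      intros a [<-|Ha]; [left; exact Hxm|auto].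
    + exists m. split; [right; exact Hm|].
      intros a [<-|Ha]; [right; exact Hxm|auto].
    + exists x. split; [left; reflexivity|].
      intros a [<-|Ha]; [apply le_refl|]. eapply le_trans; [apply Hmax, Ha|right; exact Hmx].
Qed.

Lemma pow_le_1 z n : z ≼ e -> pow z n ≼ e.
Proof.
  intros Hz. induction n as [|n IH]; [apply le_refl|].
  rewrite pow_succ. eapply le_trans; [apply le_mul2l, IH|]. rewrite mulg1. exact Hz.
Qed.

Section Central.
Variable Z : G -> Prop.
Hypothesis HZ : is_subgroup mul e inv Z.
Hypothesis HZc : central mul Z.

Lemma pow_in z n : Z z -> Z (pow z n).
Proof.
  intros Zz. induction n as [|n IH]; simpl; apply HZ; auto.
Qed.

Lemma lt_mul_central z x : Z z -> e ≺ z -> x ≺ z * x.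
Proof.
  intros Zz Hz. rewrite (HZc z x Zz). rewrite <- (mulg1 x) at 1. apply lt_mul2l. exact Hz.
Qed.

Lemma le_pow_mul z n x : Z z -> e ≺ z -> x ≼ pow z n * x.
Proof.
  intros Zz Hz. induction n as [|n IH].
  - rewrite mul1g. apply le_refl.
  - rewrite pow_succ, <- mulgA. eapply le_trans; [exact IH|].
    right. apply lt_mul_central; auto.
Qed.

Lemma word_prod_le_pow m w :
  Forall (fun a => Z a /\ a ≼ m) w -> word_prod mul e w ≼ pow m (length w).
Proof.
  induction w as [|a w IH]; intros Hw; simpl; [apply le_refl|].
  inversion_clear Hw as [|? ? [Za Ham] Hw'].
  eapply le_trans; [apply le_mul2l, IH, Hw'|].
  rewrite (HZc a (pow m (length w)) Za), <- pow_mulC. apply le_mul2l, Ham.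
Qed.

Lemma ex_dominating :
  fg_subgroup mul e inv Z -> exists m, Z m /\ forall h, Z h -> exists k, h ≼ pow m k.
Proof.
  intros (Y & HYZ & HZY).
  destruct (ex_list_max e (Y ++ map inv Y)) as (m & Hm & Hmax).
  exists m. split.
  - destruct Hm as [<-|Hm]; [apply HZ|].
    apply in_app_or in Hm as [Hm|Hm]; auto.
    apply in_map_iff in Hm as (y & <- & Hy). apply HZ. auto.
  - intros h Zh. apply HZY in Zh as (w & Hw & ->). exists (length w).
    apply word_prod_le_pow. eapply Forall_impl; [|exact Hw].
    intros a [Ha|Ha]; split.
    + auto.
    + apply Hmax. right. apply in_or_app. left. exact Ha.
    + rewrite <- (invgK a). apply HZ. auto.
    + apply Hmax. right. apply in_or_app. right.
      apply in_map_iff. exists (inv a). rewrite invgK. auto.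
Qed.

Section Dominating.
Variable m : G.
Hypothesis Zm : Z m.
Hypothesis Hm : forall h, Z h -> exists k, h ≼ pow m k.
Hypothesis Hcof : cofinal lt Z.

Lemma dominating_pos : e ≺ m.
Proof.
  destruct (Hcof e) as (_ & h & _ & Zh & _ & Hh).
  destruct (Hm h Zh) as [k Hk].
  assert (Hnot : ~ m ≼ e).
  { intros Hme. apply (lt_irrefl e).
    eapply lt_le_trans; [eapply lt_le_trans; [exact Hh|exact Hk]|apply pow_le_1, Hme]. }
  destruct (lt_total e m) as [Hem|[Hem|Hme]]; auto; exfalso; apply Hnot.
  - left. symmetry. exact Hem.
  - right. exact Hme.
Qed.

Lemma dominating_translate g : exists k, e ≺ pow m k * g.
Proof.
  destruct (Hcof (inv g)) as (_ & h & _ & Zh & _ & Hh).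
  destruct (Hm h Zh) as [k Hk]. exists k.
  rewrite (HZc (pow m k) g (pow_in m k Zm)), <- (mulgV g).
  apply lt_mul2l. eapply lt_le_trans; [exact Hh|exact Hk].
Qed.

Lemma eventually_pos g : exists N, forall n, N <= n -> e ≺ pow m n * g.
Proof.
  destruct (dominating_translate g) as [k Hk]. exists k. intros n Hn.
  replace n with ((n - k) + k) by lia. rewrite pow_add, <- mulgA.
  eapply lt_le_trans; [exact Hk|]. apply le_pow_mul; [exact Zm|apply dominating_pos].
Qed.

Lemma eventually_pos_prefixes w :
  exists N, forall n, N <= n -> forall k, e ≺ pow m n * word_prod mul e (firstn k w).
Proof.
  destruct (eventually_forall_le
              (fun k n => e ≺ pow m n * word_prod mul e (firstn k w)) (length w))
    as [N HN].
  { intros k. apply eventually_pos. }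
  exists N. intros n Hn k.
  destruct (Nat.le_gt_cases k (length w)) as [Hk|Hk]; [apply HN; auto|].
  rewrite firstn_all2 by lia. rewrite <- (firstn_all w) at 1. apply HN; auto.
Qed.

End Dominating.

Section PositiveConePaths.
Variables (X : list G) (z : G) (wz : list G) (r : nat).
Hypotheses (Zz : Z z) (z_pos : e ≺ z).
Hypotheses (Hwz : Forall (letter inv X) wz) (z_word : z = word_prod mul e wz).
Hypotheses (Hr : 1 <= r) (Hwz_r : length wz <= r).

Local Notation path := (clos_refl_trans G (coarse_step X (positive_cone e lt) r)).

Lemma path_pow_mul x n : e ≺ x -> path x (pow z n * x).
Proof.
  intros Hx. induction n as [|n IH].
  - rewrite mul1g. apply rt_refl.
  - apply rt_trans with (pow z n * x); [exact IH|].
    assert (Hy : e ≺ pow z n * x) by (eapply lt_le_trans; [exact Hx|apply le_pow_mul; auto]).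
    rewrite pow_succ, <- mulgA. apply rt_step. repeat split.
    + exact Hy.
    + eapply lt_trans; [exact Hy|apply lt_mul_central; auto].
    + exists wz. repeat split; auto. rewrite <- z_word. symmetry. apply HZc, Zz.
Qed.

Lemma path_to_pow w N :
  Forall (letter inv X) w -> e ≺ word_prod mul e w ->
  (forall k, e ≺ pow z N * word_prod mul e (firstn k w)) ->
  path (word_prod mul e w) (pow z N).
Proof.
  intros Hw Hpos Hpre.
  apply rt_trans with (pow z N * word_prod mul e w); [apply path_pow_mul, Hpos|].
  apply coarse_path_sym, coarse_path_word; auto.
Qed.

End PositiveConePaths.
Section Cofinal.
Hypotheses (Hfg : fg_subgroup mul e inv Z) (Hcof : cofinal lt Z).
Variable X : list G.
Hypothesis HX : generates mul e inv X.

Lemma positive_cone_coarsely_connected : coarsely_connected mul e inv X (positive_cone e lt).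
Proof.
  destruct (ex_dominating Hfg) as (m & Zm & Hm).
  pose proof (dominating_pos m Hm Hcof) as m_pos.
  destruct (HX m) as (wm & Hwm & m_word).
  exists (S (length wm)). split; [lia|].
  intros s t Hs Ht.
  destruct (HX s) as (ws & Hws & ->), (HX t) as (wt & Hwt & ->).
  destruct (eventually_pos_prefixes m Zm Hm Hcof ws) as (Ns & HNs).
  destruct (eventually_pos_prefixes m Zm Hm Hcof wt) as (Nt & HNt).
  apply rt_trans with (pow m (max Ns Nt)).
  - apply (path_to_pow X m wm); auto; [lia|apply HNs; lia].
  - apply coarse_path_sym, (path_to_pow X m wm); auto; [lia|apply HNt; lia].
Qed.

End Cofinal.
End Central.
End Order.
End Group.

Theorem lemma4p14 (G : Type) (mul : G -> G -> G) (e : G) (inv : G -> G)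
  (lt : G -> G -> Prop) (Z : G -> Prop) :
  is_group mul e inv ->
  fin_generated mul e inv ->
  left_inv_total_order mul lt ->
  is_subgroup mul e inv Z ->
  central mul Z ->
  fg_subgroup mul e inv Z ->
  cofinal lt Z ->
  forall X : list G, generates mul e inv X ->
    coarsely_connected mul e inv X (positive_cone e lt).
Proof.
  intros HG _ Hlt HZ HZc Hfg Hcof X HX.
  eapply positive_cone_coarsely_connected; eassumption.
Qed.
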